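(* (Sound slicing.) For every entity store $\mu$, every finite set of policies $C$, every request $\sigma$, and every policy $c \in C$: if $c \notin \mathrm{slice}(C,\sigma)$, then $\mathrm{toexp}(c)$ does not evaluate to $\mathtt{true}$ under $\mu,\sigma$.
   Context: Entity references have the form $E::s$ with $E$ an entity type name and $s$ a string. An entity store $\mu$ is a finite partial map from entity references to pairs $(r,h)$, where $r$ is a record value (the attributes) and $h$ is a finite set of entity references (the ancestors). For an entity reference $u$, let $h_\mu(u)$ be the second component of $\mu(u)$ if $u \in \mathrm{dom}(\mu)$, and $\emptyset$ otherwise. A request $\sigma$ maps the variables $\mathtt{principal}$, $\mathtt{action}$, $\mathtt{resource}$ to entity references and $\mathtt{context}$ to a record value. Expressions are evaluated by a deterministic call-by-value, left-to-right semantics that may also get stuck (raise an error); we say $e$ evaluates to $v$ under $\mu,\sigma$ if evaluation terminates with value $v$. This semantics satisfies: the literal $\mathtt{true}$ evaluates to $\mathtt{true}$; $e_1 \,\&\&\, e_2$ evaluates to $\mathtt{true}$ iff $e_1$ evaluates to $\mathtt{true}$ and $e_2$ evaluates to $\mathtt{true}$; for $x \in \{\mathtt{principal},\mathtt{resource}\}$ and entity reference $u$, the expression $x == u$ evaluates to $\mathtt{true}$ iff $\sigma(x) = u$, and $x\ \mathtt{in}\ u$ evaluates to $\mathtt{true}$ iff $\sigma(x) = u$ or $u \in h_\mu(\sigma(x))$. A policy $c$ consists of an effect ($\mathtt{permit}$ or $\mathtt{forbid}$); a principal scope, which is either unconstrained or one of $\mathtt{principal} == u$, $\mathtt{principal}\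 \mathtt{in}\ u$; an action scope (unconstrained, $\mathtt{action} == u$, $\mathtt{action}\ \mathtt{in}\ u$, or $\mathtt{action}\ \mathtt{in}\ [u_1,\dots,u_n]$); a resource scope, either unconstrained or one of $\mathtt{resource} == u$, $\mathtt{resource}\ \mathtt{in}\ u$; and a finite list of conditions $\mathtt{when}\{e\}$ or $\mathtt{unless}\{e\}$. The expression $\mathrm{toexp}(c)$ is the $\&\&$-conjunction of the principal scope, action scope, resource scope (each replaced by $\mathtt{true}$ if unconstrained), and the conditions ($\mathtt{when}\{e\}$ contributes $e$, $\mathtt{unless}\{e\}$ contributes $!e$). Let $\mathrm{pof}(c)$ be the entity reference $u$ named in the principal scope of $c$, or a special symbol $\mathtt{Any}$ if unconstrained; define $\mathrm{rof}(c)$ likewise for the resource scope. With $P = \sigma(\mathtt{principal})$, $R = \sigma(\mathtt{resource})$, let $K = (h_\mu(P) \cup \{P, \mathtt{Any}\}) \times (h_\mu(R) \cup \{R, \mathtt{Any}\})$ and $\mathrm{slice}(C,\sigma) = \{ c \in C : (\mathrm{pof}(c), \mathrm{rof}(c)) \in K\}$ (the slice also depends on $\mu$). *)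

(* A core Cedar-like syntax; evaluation is kept abstract
   (a relation supplied as a parameter of the theorem) and only the
   properties stated in the paper's context are assumed of it. *)
From Stdlib Require Import String List ZArith.
Import ListNotations.

Record uid := UID { ety : string; eid : string }.

Inductive value : Type :=
| VBool   : bool -> value
| VLong   : Z -> value
| VString : string -> value
| VEntity : uid -> value
| VSet    : list value -> value
| VRecord : list (string * value) -> value.

Definition record_value := list (string * value).

(* Entity store: finite partial map uid -> (attributes, ancestors).
   Represented as an association list (first binding wins). *)
Definition store := list (uid * (record_value * list uid)).

Fixpoint lookup (mu : store) (u : uid) : option (record_value * list uid) :=
  match mu with
  | [] => None
  | (u', d) :: mu' => if (String.eqb (ety u) (ety u') && String.eqb (eid u) (eid u'))%bool
                      then Some d else lookup mu' u
  end.

Definition anc (mu : store) (u : uid) : list uid :=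
  match lookup mu u with Some (_, h) => h | None => [] end.

Record request := Req {
  principal : uid; action : uid; resource : uid; context : record_value }.

Inductive var := Principal | Action | Resource | Context.

Inductive binop := OpEq | OpIn | OpAnd | OpOr | OpLt | OpLe | OpAdd | OpSub
                 | OpMul | OpContains | OpContainsAll | OpContainsAny.

Inductive expr : Type :=
| Lit     : value -> expr
| Var     : var -> expr
| And     : expr -> expr -> expr
| Or      : expr -> expr -> expr
| Not     : expr -> expr
| Ite     : expr -> expr -> expr -> expr
| Eq      : expr -> expr -> expr
| InE     : expr -> expr -> expr
| BinApp  : binop -> expr -> expr -> expr
| SetE    : list expr -> expr
| RecordE : list (string * expr) -> expr
| GetAttr : expr -> string -> expr
| HasAttr : expr -> string -> expr
| Like    : expr -> string -> expr
| Is      : expr -> string -> expr.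

Definition ent (u : uid) : expr := Lit (VEntity u).

Inductive effect := Permit | Forbid.
Inductive pscope := PAny | PEq (u : uid) | PIn (u : uid).
Inductive rscope := RAny | REq (u : uid) | RIn (u : uid).
Inductive ascope := AAny | AEq (u : uid) | AIn (u : uid) | AInList (us : list uid).
Inductive condition := When (e : expr) | Unless (e : expr).

Record policy := Policy {
  peffect : effect; pscp : pscope; ascp : ascope; rscp : rscope;
  pconds : list condition }.

Definition pscope_exp (s : pscope) : expr :=
  match s with
  | PAny => Lit (VBool true)
  | PEq u => Eq (Var Principal) (ent u)
  | PIn u => InE (Var Principal) (ent u)
  end.
Definition rscope_exp (s : rscope) : expr :=
  match s with
  | RAny => Lit (VBool true)
  | REq u => Eq (Var Resource) (ent u)
  | RIn u => InE (Var Resource) (ent u)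
  end.
Definition ascope_exp (s : ascope) : expr :=
  match s with
  | AAny => Lit (VBool true)
  | AEq u => Eq (Var Action) (ent u)
  | AIn u => InE (Var Action) (ent u)
  | AInList us => InE (Var Action) (SetE (map ent us))
  end.
Definition cond_exp (c : condition) : expr :=
  match c with When e => e | Unless e => Not e end.

Fixpoint conj_all (e : expr) (es : list expr) : expr :=
  match es with
  | [] => e
  | e' :: es' => And e (conj_all e' es')
  end.

Definition toexp (c : policy) : expr :=
  conj_all (pscope_exp (pscp c))
    (ascope_exp (ascp c) :: rscope_exp (rscp c) :: map cond_exp (pconds c)).

(* pof / rof : None stands for the special symbol Any *)
Definition pof (c : policy) : option uid :=
  match pscp c with PAny => None | PEq u | PIn u => Some u end.
Definition rof (c : policy) : option uid :=
  match rscp c with RAny => None | REq u | RIn u => Some u end.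

Definition key_ok (mu : store) (X : uid) (a : option uid) : Prop :=
  match a with None => True | Some u => u = X \/ In u (anc mu X) end.

Definition in_slice (mu : store) (C : list policy) (s : request) (c : policy) : Prop :=
  In c C /\ key_ok mu (principal s) (pof c) /\ key_ok mu (resource s) (rof c).

Definition req_var (s : request) (x : var) : option uid :=
  match x with
  | Principal => Some (principal s) | Action => Some (action s)
  | Resource => Some (resource s) | Context => None end.

Definition eval_assumptions
  (eval : store -> request -> expr -> value -> Prop) : Prop :=
  (forall mu s e v1 v2, eval mu s e v1 -> eval mu s e v2 -> v1 = v2) /\
  (forall mu s, eval mu s (Lit (VBool true)) (VBool true)) /\
  (forall mu s e1 e2, eval mu s (And e1 e2) (VBool true) <->
     (eval mu s e1 (VBool true) /\ eval mu s e2 (VBool true))) /\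
  (forall mu s u, eval mu s (Eq (Var Principal) (ent u)) (VBool true) <-> principal s = u) /\
  (forall mu s u, eval mu s (Eq (Var Resource) (ent u)) (VBool true) <-> resource s = u) /\
  (forall mu s u, eval mu s (InE (Var Principal) (ent u)) (VBool true) <->
     (principal s = u \/ In u (anc mu (principal s)))) /\
  (forall mu s u, eval mu s (InE (Var Resource) (ent u)) (VBool true) <->
     (resource s = u \/ In u (anc mu (resource s)))).

(* Since toexp c is a right-nested conjunction whose first
   conjunct is the principal scope and whose third is the resource scope,
   evaluating it to true forces both scopes to be true, and the semantics of
   == and in then put the named entities back into the slice keys. *)
From Stdlib Require Import List.

Section SoundSlicing.

Variable eval : store -> request -> expr -> value -> Prop.
Hypothesis Heval : eval_assumptions eval.

Lemma eval_And_true mu s e1 e2 :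
  eval mu s (And e1 e2) (VBool true) ->
  eval mu s e1 (VBool true) /\ eval mu s e2 (VBool true).
Proof. destruct Heval as (_ & _ & HAnd & _); apply HAnd. Qed.

Lemma eval_conj_all_head mu s e es :
  eval mu s (conj_all e es) (VBool true) -> eval mu s e (VBool true).
Proof.
  destruct es as [|e' es]; simpl; [auto|].
  intros H; apply eval_And_true in H; tauto.
Qed.

Lemma eval_toexp_scopes mu s c :
  eval mu s (toexp c) (VBool true) ->
  eval mu s (pscope_exp (pscp c)) (VBool true) /\
  eval mu s (rscope_exp (rscp c)) (VBool true).
Proof.
  unfold toexp; simpl; intros H.
  apply eval_And_true in H as [Hp Hrest].
  apply eval_And_true in Hrest as [_ Hrest].
  split; [exact Hp | exact (eval_conj_all_head _ _ _ _ Hrest)].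
Qed.

Lemma eval_pscope_key_ok mu s c :
  eval mu s (pscope_exp (pscp c)) (VBool true) -> key_ok mu (principal s) (pof c).
Proof.
  destruct Heval as (_ & _ & _ & HPeq & _ & HPin & _).
  unfold pof; destruct (pscp c) as [|u|u]; simpl; intros H; auto.
  - left; symmetry; apply (HPeq mu s u); exact H.
  - destruct (proj1 (HPin mu s u) H); auto.
Qed.

Lemma eval_rscope_key_ok mu s c :
  eval mu s (rscope_exp (rscp c)) (VBool true) -> key_ok mu (resource s) (rof c).
Proof.
  destruct Heval as (_ & _ & _ & _ & HReq & _ & HRin).
  unfold rof; destruct (rscp c) as [|u|u]; simpl; intros H; auto.
  - left; symmetry; apply (HReq mu s u); exact H.
  - destruct (proj1 (HRin mu s u) H); auto.
Qed.

Lemma eval_toexp_in_slice mu C s c :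
  In c C -> eval mu s (toexp c) (VBool true) -> in_slice mu C s c.
Proof.
  intros HC H; apply eval_toexp_scopes in H as [Hp Hr].
  split; [exact HC|].
  split; [apply eval_pscope_key_ok | apply eval_rscope_key_ok]; assumption.
Qed.

End SoundSlicing.

Theorem mainTheorem4
  (eval : store -> request -> expr -> value -> Prop)
  (Heval : eval_assumptions eval) :
  forall (mu : store) (C : list policy) (sigma : request) (c : policy),
    In c C -> ~ in_slice mu C sigma c ->
    ~ eval mu sigma (toexp c) (VBool true).
Proof.
  intros mu C sigma c HC Hnot Htrue.
  exact (Hnot (eval_toexp_in_slice eval Heval mu C sigma c HC Htrue)).
Qed.
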